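(* Let $M$ be a real symmetric matrix whose induced signed graph $\Gamma=(G,\sigma)$, $G=(V,E)$, is connected, and let $f$ be an eigenfunction of $M$ for an eigenvalue $\lambda$. Let $D_1,\dots,D_m$ be the weak nodal domains of $f$, and for each $i$ let $g_i(x)=f(x)$ if $x\in D_i$ and $g_i(x)=0$ otherwise. If $g=\sum_{i=1}^m a_ig_i$ with $a_1,\dots,a_m\in\mathbb R$ is an eigenfunction of $M$ for $\lambda$, then $a_1=a_2=\cdots=a_m$.
   Context: The induced signed graph of a real symmetric $n\times n$ matrix $M$ has vertices $x_1,\dots,x_n$, edge $\{x_i,x_j\}$ iff $i\ne j$ and $M_{ij}\ne0$, sign $\sigma_{x_ix_j}=-M_{ij}/|M_{ij}|$. Eigenfunctions are nonzero eigenvectors viewed as functions on $V$. A walk is $y_1,\dots,y_m$ ($m\ge2$) with consecutive vertices adjacent. A W-walk of $f$ is a walk such that for any two consecutive nonzeros $y_i,y_j$ along it ($i<j$, $f(y_i)\ne0\ne f(y_j)$, $f(y_l)=0$ for $i<l<j$) one has $f(y_i)\sigma_{y_iy_{i+1}}\cdots\sigma_{y_{j-1}y_j}f(y_j)>0$. On $\Omega=\{x:f(x)\ne0\}$ the relation ''$x=y$ or a W-walk connects $x$ and $y$'' is an equivalence relation with classes $W_1,\dots,W_q$; the weak nodal domains of $f$ are the induced subgraphs on $W_i^0=W_i\cup\{x\in V:\text{there is a W-walk from } x \text{ to some vertex of } W_i\}$ (membership $x\in D_i$ refers to the vertex set). *)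

From HB Require Import structures.
From mathcomp Require Import all_boot all_order all_algebra fingraph.
From mathcomp Require Import boolp reals.
Set Implicit Arguments. Unset Strict Implicit. Unset Printing Implicit Defensive.
Import Order.TTheory GRing.Theory Num.Theory.
Local Open Scope ring_scope.

Section SignedGraph.
Variables (R : realType) (n : nat) (M : 'M[R]_n).

Definition adj : rel 'I_n := fun i j => (i != j) && (M i j != 0).

(* sign sigma_{x_i x_j} = - M_ij / |M_ij| (only meaningful on edges) *)
Definition sgn (i j : 'I_n) : R := - (M i j / `|M i j|).

Variable f : 'cV[R]_n.
Definition fv (x : 'I_n) : R := f x 0.

(* a walk y_1, ..., y_m (m >= 2) is represented as x :: s with s nonempty *)
Definition is_walk (x : 'I_n) (s : seq 'I_n) : bool :=
  (0 < size s)%N && path adj x s.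

Definition W_cond (x : 'I_n) (s : seq 'I_n) : Prop :=
  let w := x :: s in
  forall i j : nat, (i < j < size w)%N ->
    fv (nth x w i) != 0 -> fv (nth x w j) != 0 ->
    (forall l : nat, (i < l < j)%N -> fv (nth x w l) = 0) ->
    0 < fv (nth x w i) * (\prod_(i <= k < j) sgn (nth x w k) (nth x w k.+1))
          * fv (nth x w j).

Definition W_walk (x : 'I_n) (s : seq 'I_n) : Prop := is_walk x s /\ W_cond x s.

Definition W_conn (x y : 'I_n) : Prop :=
  exists s : seq 'I_n, W_walk x s /\ last x s = y.

Definition Omega : {set 'I_n} := [set x | fv x != 0].

Definition W_class (x : 'I_n) : {set 'I_n} :=
  [set y | (fv y != 0) && `[< y = x \/ W_conn x y >]].

Definition W_classes : {set {set 'I_n}} := [set W_class x | x in Omega].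

Definition weak_domain (W : {set 'I_n}) : {set 'I_n} :=
  W :|: [set x | `[< exists y, y \in W /\ W_conn x y >]].

Definition restr (D : {set 'I_n}) : 'cV[R]_n :=
  \col_i (if i \in D then f i 0 else 0).

End SignedGraph.

Definition eigenfunction (R : realType) (n : nat) (M : 'M[R]_n) (lam : R)
  (f : 'cV[R]_n) : Prop := f != 0 /\ M *m f = lam *: f.

From HB Require Import structures.
From mathcomp Require Import all_boot all_order all_algebra fingraph.
From mathcomp Require Import boolp reals.
From mathcomp Require Import zify ring.
Import Order.TTheory GRing.Theory Num.Theory.
Local Open Scope ring_scope.
Set Implicit Arguments. Unset Strict Implicit. Unset Printing Implicit Defensive.

(* Let m be the largest coefficient a_i. Then h = g - m f is again a
   lam-eigenfunction, and h = b f with b = a_i - m <= 0 on the domain D_i.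
   If b vanishes at a nonzero vertex x, consider the row of M h = lam h at x,
   or at a zero neighbour z of x: its terms all have one sign, because a
   neighbour j of the other sign is joined to x by a W-walk of length 1 or 2,
   hence lies in the domain of x, where b = 0.  So the row vanishes termwise
   and b = 0 spreads to the nonzero neighbours.
   Across a longer stretch of zeros, the row of M f = lam f at its first
   vertex z yields neighbours of z of both signs with b = 0, and one of them
   reaches the next nonzero vertex through a W-walk along the stretch.  By
   connectedness b = 0 on the whole support, i.e. all a_i equal m. *)

Lemma prod_nat_rev (S : comPzSemiRingType) (F G : nat -> S) (N i j : nat) :
  (j < N)%N -> (i <= j)%N ->
  (forall k, (i <= k < j)%N -> F k = G (N - k.+2)%N) ->
  \prod_(i <= k < j) F k = \prod_(N - j.+1 <= k < N - i.+1) G k.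
Proof.
elim: j => [|j IHj] jN ij FG; first by rewrite (_ : i = 0%N) ?big_geq //; lia.
have [->|ij'] : (i = j.+1 \/ i < j.+1)%N by lia.
  by rewrite !big_geq.
rewrite big_nat_recr //= (@big_ltn _ _ _ (N - j.+2)); last by lia.
rewrite (_ : (N - j.+2).+1 = N - j.+1)%N; last by lia.
rewrite IHj; [|lia|lia|by move=> k /andP[ik kj]; apply: FG; lia].
by rewrite FG 1?mulrC //; lia.
Qed.

Section WWalks.
Variables (R : realType) (n : nat) (M : 'M[R]_n) (f : 'cV[R]_n).
Hypothesis M_sym : M^T = M.

Local Notation fv := (fv f).
Local Notation adj := (adj M).
Local Notation sgn := (sgn M).

Lemma M_symE i j : M i j = M j i.
Proof. by rewrite -{1}M_sym mxE. Qed.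

Lemma adj_sym : symmetric adj.
Proof. by move=> i j; rewrite /adj eq_sym M_symE. Qed.

Lemma sgn_sym x y : sgn x y = sgn y x.
Proof. by rewrite /sgn M_symE. Qed.

(* [W_cond x s] is [Wcond_seq x (x :: s)]; freeing the default element from
   the head of the walk is what allows reversing and splitting walks. *)
Definition Wcond_seq (d : 'I_n) (w : seq 'I_n) : Prop :=
  forall i j : nat, (i < j < size w)%N ->
    fv (nth d w i) != 0 -> fv (nth d w j) != 0 ->
    (forall l : nat, (i < l < j)%N -> fv (nth d w l) = 0) ->
    0 < fv (nth d w i) * (\prod_(i <= k < j) sgn (nth d w k) (nth d w k.+1))
          * fv (nth d w j).

Lemma Wcond_seq_default d d' w : Wcond_seq d w -> Wcond_seq d' w.
Proof.
move=> Ww i j /andP[ij jw] ni nj hl.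
have E k : (k < size w)%N -> nth d' w k = nth d w k by exact: set_nth_default.
rewrite (eq_big_nat _ _ (F2 := fun k => sgn (nth d w k) (nth d w k.+1))); last first.
  by move=> k /andP[_ kj]; rewrite !E //; lia.
rewrite !E in ni nj *; try lia.
apply: Ww => //; first by rewrite ij jw.
by move=> l /andP[il lj]; rewrite -E ?hl ?il //; lia.
Qed.

Lemma Wcond_seq_rev d w : Wcond_seq d w -> Wcond_seq d (rev w).
Proof.
move=> Ww i j; rewrite size_rev => /andP[ij jN] ni nj hl.
have iN : (i < size w)%N by exact: ltn_trans jN.
rewrite !nth_rev // in ni nj *.
rewrite (@prod_nat_rev _ _ (fun k => sgn (nth d w k) (nth d w k.+1)) (size w)) //;
  last 2 first.
- exact: ltnW.
- move=> k /andP[ik kj]; rewrite !nth_rev; [|lia|lia].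
  rewrite (_ : (size w - k.+2).+1 = size w - k.+1)%N; last by lia.
  exact: sgn_sym.
set P := \prod_(_ <= _ < _) _.
rewrite -mulrA mulrC [P * _]mulrC.
apply: Ww => //; first by lia.
move=> l /andP[jl li]; have := hl (size w - l.+1)%N.
rewrite nth_rev; last by lia.
by rewrite (_ : size w - (size w - l.+1).+1 = l)%N; [apply; lia | lia].
Qed.

Lemma Wcond_seq_cat d w1 y w2 : fv y != 0 ->
  Wcond_seq d (rcons w1 y) -> Wcond_seq d (y :: w2) -> Wcond_seq d (w1 ++ y :: w2).
Proof.
move=> ny W1 W2 i j /andP[ij jw] ni nj hl.
set p := size w1.
have nth_l k : (k <= p)%N -> nth d (w1 ++ y :: w2) k = nth d (rcons w1 y) k.
  by move=> kp; rewrite -cat_rcons nth_cat size_rcons ltnS kp.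
have nth_r k : nth d (w1 ++ y :: w2) (p + k) = nth d (y :: w2) k.
  by rewrite nth_cat ltnNge leq_addr /= addKn.
have [jp|pj] := leqP j p.
  rewrite (eq_big_nat _ _ (F2 := fun k => sgn (nth d (rcons w1 y) k)
                                             (nth d (rcons w1 y) k.+1))); last first.
    by move=> k /andP[_ kj]; rewrite !nth_l //; lia.
  rewrite !nth_l // in ni nj *; last exact: ltnW (leq_trans ij jp).
  apply: W1 => //; first by rewrite size_rcons ij ltnS.
  by move=> l /andP[il lj]; rewrite -nth_l ?hl ?il //; lia.
have pi : (p <= i)%N.
  rewrite leqNgt; apply/negP => ip.
  by move: (hl p); rewrite ip pj -[p]addn0 nth_r => /(_ isT)/eqP; rewrite (negbTE ny).
have [i' Ei] : exists i', i = (p + i')%N by exists (i - p)%N; rewrite subnKC.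
have [j' Ej] : exists j', j = (p + j')%N by exists (j - p)%N; rewrite subnKC // ltnW.
subst i j; rewrite [(p + i')%N]addnC big_addn addKn.
rewrite (eq_big_nat _ _ (F2 := fun k => sgn (nth d (y :: w2) k)
                                           (nth d (y :: w2) k.+1))); last first.
  by move=> k _; rewrite addnC -addnS !nth_r.
rewrite [(i' + p)%N]addnC !nth_r in ni nj *; apply: W2 => //.
  by move: jw; rewrite size_cat /= -/p; lia.
by move=> l /andP[il lj]; rewrite -nth_r hl //; lia.
Qed.

Lemma W_conn_sym x y : W_conn M f x y -> W_conn M f y x.
Proof.
case=> s [[/andP[s0 xs] Wxs] sy].
have rev_walk : y :: rev (belast x s) = rev (x :: s).
  by rewrite [x :: s]lastI rev_rcons sy.
exists (rev (belast x s)); split; last first.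
  by rewrite -[last y _]/(last y (y :: _)) rev_walk rev_cons last_rcons.
split; last first.
  by rewrite /W_cond rev_walk; apply: Wcond_seq_rev; exact: Wcond_seq_default Wxs.
rewrite /is_walk size_rev size_belast s0 -sy rev_path.
by rewrite (@eq_path _ _ adj) // => u v; exact: adj_sym.
Qed.

Lemma W_conn_trans x y z :
  fv y != 0 -> W_conn M f x y -> W_conn M f y z -> W_conn M f x z.
Proof.
move=> ny [s1 [[/andP[s10 xs1] W1] sy]] [s2 [[/andP[_ ys2] W2] sz]].
exists (s1 ++ s2); split; last by rewrite last_cat sy.
split; first by rewrite /is_walk size_cat addn_gt0 s10 cat_path xs1 sy ys2.
have split_walk : x :: s1 ++ s2 = belast x s1 ++ y :: s2.
  by rewrite -cat_cons lastI sy cat_rcons.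
rewrite /W_cond split_walk; apply: Wcond_seq_cat => //; first by rewrite -sy -lastI.
exact: Wcond_seq_default W2.
Qed.

Local Notation K := (W_class M f).

Lemma W_class_id x : fv x != 0 -> x \in K x.
Proof. by move=> nx; rewrite inE nx; apply/asboolP; left. Qed.

Lemma W_class_mem x y : y \in K x -> fv y != 0 /\ (y = x \/ W_conn M f x y).
Proof. by rewrite inE => /andP[ny /asboolP]. Qed.

Lemma W_class_conn x y : fv x != 0 -> fv y != 0 -> W_conn M f x y -> K x = K y.
Proof.
move=> nx ny xy; apply/setP => z; rewrite !inE.
apply/andP/andP => -[nz /asboolP xz]; split => //; apply/asboolP; right.
  case: xz => [->|xz]; first exact: W_conn_sym.
  exact: W_conn_trans nx (W_conn_sym xy) xz.
by case: xz => [->|yz]; last exact: W_conn_trans ny xy yz.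
Qed.

Lemma W_class_eq x y : fv x != 0 -> y \in K x -> K x = K y.
Proof. by move=> nx /W_class_mem[ny [->|]] //; exact: W_class_conn. Qed.

Lemma mem_weak_domain x w : fv x != 0 -> fv w != 0 ->
  (x \in weak_domain M f (K w)) = (K w == K x).
Proof.
move=> nx nw; apply/idP/eqP => [|->]; last by rewrite inE W_class_id.
rewrite inE => /orP[xw|]; first exact: W_class_eq.
rewrite inE => /asboolP[y [yw xy]].
have [ny _] := W_class_mem yw.
by rewrite (W_class_eq nw yw) (W_class_conn nx ny xy).
Qed.

Lemma weak_domain_combination_entry (a : {set 'I_n} -> R) x :
  (\sum_(W in W_classes M f) a W *: restr f (weak_domain M f W)) x 0
  = a (K x) * fv x.
Proof.
rewrite summxE; have [fx0|nx] := eqVneq (fv x) 0.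
  rewrite fx0 mulr0 big1 // => W _.
  by rewrite !mxE -/(fv x) fx0; case: ifP; rewrite mulr0.
rewrite (bigD1 (K x)) /=; last by apply/imsetP; exists x; rewrite ?inE.
rewrite !mxE (mem_weak_domain nx nx) eqxx big1 ?addr0 // => W.
case/andP=> /imsetP[w + ->] Kwx; rewrite inE => nw.
by rewrite !mxE (mem_weak_domain nx nw) (negbTE Kwx) mulr0.
Qed.

Fixpoint walk_sign (x : 'I_n) (s : seq 'I_n) : R :=
  if s is y :: s' then sgn x y * walk_sign y s' else 1.

Lemma walk_signE d x s :
  \prod_(0 <= k < size s) sgn (nth d (x :: s) k) (nth d (x :: s) k.+1)
  = walk_sign x s.
Proof.
elim: s x => [|y s IHs] x /=; first by rewrite big_geq.
by rewrite big_nat_recl //= -IHs.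
Qed.

Lemma walk_sign_neq0 x s : path adj x s -> walk_sign x s != 0.
Proof.
elim: s x => [|y s IHs] x /=; first by rewrite oner_neq0.
case/andP=> /andP[_ Mxy] ys; rewrite mulf_neq0 ?IHs //.
by rewrite /sgn oppr_eq0 mulf_neq0 ?invr_eq0 ?normr_eq0.
Qed.

Lemma gt0_mul_sgn c x y : M x y != 0 -> (0 < c * sgn x y) = (c * M x y < 0).
Proof.
by move=> Mxy; rewrite /sgn mulrN oppr_gt0 mulrA pmulr_llt0 // invr_gt0 normr_gt0.
Qed.

Lemma lt0_mul_sgn c x y : M x y != 0 -> (c * sgn x y < 0) = (0 < c * M x y).
Proof.
by move=> Mxy; rewrite /sgn mulrN oppr_lt0 mulrA pmulr_lgt0 // invr_gt0 normr_gt0.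
Qed.

Lemma W_conn_zero_interior x zs y : all (fun z => fv z == 0) zs ->
  path adj x (rcons zs y) -> 0 < fv x * walk_sign x (rcons zs y) * fv y ->
  W_conn M f x y.
Proof.
move=> zs0 xy pos; exists (rcons zs y); split; last exact: last_rcons.
split; first by rewrite /is_walk size_rcons xy.
have nth_zs k : (0 < k <= size zs)%N -> fv (nth x (x :: rcons zs y) k) = 0.
  case: k => // k /= ks; rewrite nth_rcons ks.
  by apply/eqP; move/allP: zs0; apply; rewrite mem_nth.
move=> i j; rewrite /= size_rcons => /andP[ij jy] ni nj _.
have i0 : i = 0%N.
  case: i ij ni => // i ij; rewrite nth_zs; [by rewrite eqxx | lia].
have -> : j = (size zs).+1.
  apply/eqP; rewrite eqn_leq -ltnS jy leqNgt; apply/negP => js; move: nj.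
  by rewrite nth_zs; [rewrite eqxx | rewrite -i0 ij].
subst i.
by rewrite /= nth_rcons ltnn eqxx -(size_rcons zs y) walk_signE.
Qed.

Lemma W_conn_edge x y : x != y -> fv x * M x y * fv y < 0 -> W_conn M f x y.
Proof.
move=> xy neg; have Mxy : M x y != 0.
  by apply: contraTneq neg => ->; rewrite mulr0 mul0r ltxx.
apply: (@W_conn_zero_interior x [::]) => //=; first by rewrite /adj xy Mxy.
by rewrite mulr1 mulrAC gt0_mul_sgn // mulrAC.
Qed.

Lemma W_conn_via_zero_walk u z zs y : fv z = 0 ->
  all (fun z => fv z == 0) zs -> path adj z (rcons zs y) ->
  fv u * M u z * (walk_sign z (rcons zs y) * fv y) < 0 -> W_conn M f u y.
Proof.
move=> z0 zs0 zy neg.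
move: (ltr0_neq0 neg); rewrite !mulf_eq0 !negb_or => /andP[/andP[nu Muz] _].
apply: (@W_conn_zero_interior u (z :: zs)) => /=; first by rewrite z0 eqxx.
  by rewrite zy andbT /adj Muz andbT; apply: contraNneq nu => ->; rewrite z0.
by rewrite -!mulrA mulrCA mulrC gt0_mul_sgn // mulrAC.
Qed.

Lemma W_conn_via_zero x z y : fv z = 0 ->
  0 < fv x * M x z * M z y * fv y -> W_conn M f x y.
Proof.
move=> z0 pos; move: (lt0r_neq0 pos); rewrite !mulf_eq0 !negb_or.
case/andP=> /andP[_ Mzy] ny.
apply: (@W_conn_via_zero_walk x z [::] y) => //=.
  by rewrite andbT /adj Mzy andbT; apply: contraNneq ny => <-; rewrite z0.
by rewrite mulr1 mulrA mulrAC lt0_mul_sgn // mulrAC.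
Qed.

Section Propagation.
Variables (lam : R) (b : 'I_n -> R).
Hypothesis f_row : forall x, \sum_j M x j * fv j = lam * fv x.
Hypothesis bf_row : forall x, \sum_j M x j * (b j * fv j) = lam * (b x * fv x).
Hypothesis b_le0 : forall x, fv x != 0 -> b x <= 0.
Hypothesis b_W_conn :
  forall x y, fv x != 0 -> fv y != 0 -> W_conn M f x y -> b x = b y.

(* In row [v] of [M (b f) = lam (b f)] the terms [c M v j f j * b j] are all
   of one sign, so they all vanish. *)
Lemma row_vanishing v c : b v * fv v = 0 ->
  (forall j, 0 < c * M v j * fv j -> b j = 0) ->
  forall j, c * M v j * fv j != 0 -> b j = 0.
Proof.
move=> bv0 pos_b0.
have sum0 : \sum_j (c * M v j * fv j) * b j = c * (lam * (b v * fv v)).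
  by rewrite -bf_row mulr_sumr; apply: eq_bigr => j _; ring.
rewrite bv0 !mulr0 in sum0.
have ge0 j : 0 <= (c * M v j * fv j) * b j.
  have [pos|] := ltrP 0 (c * M v j * fv j); first by rewrite pos_b0 // mulr0.
  have [->|nj] := eqVneq (fv j) 0; first by rewrite !mulr0 mul0r.
  by move=> le0; rewrite mulr_le0 // b_le0.
move=> j nz; apply: (mulfI nz); rewrite mulr0.
exact: (psumr_eq0P (fun j _ => ge0 j) sum0).
Qed.

Lemma edge_step x y : b x = 0 -> fv x * M x y * fv y != 0 -> b y = 0.
Proof.
move=> bx0 nz; apply: (@row_vanishing x (- fv x)); last by rewrite !mulNr oppr_eq0.
  by rewrite bx0 mul0r.
move=> j; rewrite !mulNr oppr_gt0 => neg.
have [<-//|xj] := eqVneq x j.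
move: (ltr0_neq0 neg); rewrite !mulf_eq0 !negb_or => /andP[/andP[nx _] nj].
by rewrite -(b_W_conn nx nj (W_conn_edge xj neg)).
Qed.

Lemma zero_step z x y : fv z = 0 -> b x = 0 ->
  fv x * M x z * M z y * fv y != 0 -> b y = 0.
Proof.
move=> z0 bx0; apply: (@row_vanishing z (fv x * M x z)); first by rewrite z0 mulr0.
move=> j pos; move: (lt0r_neq0 pos); rewrite !mulf_eq0 !negb_or.
case/andP=> /andP[/andP[nx _] _] nj.
by rewrite -(b_W_conn nx nj (W_conn_via_zero z0 pos)).
Qed.

Lemma opposite_neighbour z x : fv z = 0 -> fv x * M x z != 0 ->
  exists x', fv x * M x z * M z x' * fv x' < 0.
Proof.
move=> z0 nz; apply/existsP; apply: contraNT nz.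
rewrite negb_exists => /forallP nneg.
have ge0 j : 0 <= fv x * M x z * M z j * fv j by rewrite leNgt nneg.
have sum0 : \sum_j fv x * M x z * M z j * fv j = fv x * M x z * (lam * fv z).
  by rewrite -f_row mulr_sumr; apply: eq_bigr => j _; rewrite mulrA.
rewrite z0 !mulr0 in sum0.
have /eqP := @psumr_eq0P _ _ predT _ (fun j _ => ge0 j) sum0 x isT.
by rewrite -mulrA [M z x * _]mulrC (M_symE z x) mulf_eq0 orbb.
Qed.

Lemma zero_walk_step z x zs y : fv z = 0 -> fv x * M x z != 0 -> b x = 0 ->
  all (fun z => fv z == 0) zs -> fv y != 0 -> path adj z (rcons zs y) -> b y = 0.
Proof.
move=> z0 nz bx0 zs0 ny zy.
have [x' neg] := opposite_neighbour z0 nz.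
have bx'0 : b x' = 0 := zero_step z0 bx0 (ltr0_neq0 neg).
set D := walk_sign z (rcons zs y) * fv y.
have DD : 0 < D * D by rewrite -expr2 exprn_even_gt0 //= mulf_neq0 ?walk_sign_neq0.
have via u : b u = 0 -> fv u * M u z * D < 0 -> b y = 0.
  move=> bu0 negu; move: (ltr0_neq0 negu); rewrite !mulf_eq0 !negb_or.
  case/andP=> /andP[nu _] _.
  by rewrite -(b_W_conn nu ny (W_conn_via_zero_walk z0 zs0 zy negu)).
have [negx|gex] := ltrP (fv x * M x z * D) 0; first exact: via x bx0 negx.
have [negx'|gex'] := ltrP (fv x' * M x' z * D) 0; first exact: via x' bx'0 negx'.
have := mulr_ge0 gex gex'.
rewrite (_ : _ * (_ * _ * D) = fv x * M x z * M z x' * fv x' * (D * D)).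
  by rewrite pmulr_lge0 // leNgt neg.
by rewrite (M_symE z x'); ring.
Qed.

Lemma walk_step x zs y : b x = 0 -> all (fun z => fv z == 0) zs -> fv x != 0 ->
  fv y != 0 -> path adj x (rcons zs y) -> b y = 0.
Proof.
move=> bx0; case: zs => [|z zs] /=.
  move=> _ nx ny /andP[/andP[_ Mxy] _].
  by apply: edge_step bx0 _; rewrite !mulf_neq0.
case/andP=> /eqP z0 zs0 nx ny /andP[/andP[_ Mxz] zy].
by apply: (zero_walk_step z0 _ bx0 zs0 ny zy); rewrite mulf_neq0.
Qed.

Lemma walk_propagation p x zs : b x = 0 -> all (fun z => fv z == 0) zs ->
  fv x != 0 -> path adj x (zs ++ p) -> {in p, forall y, fv y != 0 -> b y = 0}.
Proof.
elim: p x zs => [//|v p IHp] x zs bx0 zs0 nx.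
rewrite -cat_rcons cat_path last_rcons => /andP[xv vp] y.
have [v0|nv] := eqVneq (fv v) 0.
  rewrite inE => /orP[/eqP->|yp]; first by rewrite v0 eqxx.
  apply: (IHp x (rcons zs v)) => //; first by rewrite all_rcons v0 eqxx.
  by rewrite cat_path last_rcons xv.
have bv0 := walk_step bx0 zs0 nx nv xv.
by rewrite inE => /orP[/eqP->//|yp]; apply: (IHp v [::]).
Qed.

Lemma connected_propagation x : (forall x y, connect adj x y) ->
  b x = 0 -> fv x != 0 -> forall y, fv y != 0 -> b y = 0.
Proof.
move=> conn bx0 nx y ny; have [<-//|xy] := eqVneq x y.
have /connectP[p xp yp] := conn x y.
apply: (@walk_propagation p x [::] bx0) => //.
by move: (mem_last x p); rewrite -yp inE eq_sym (negbTE xy).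
Qed.

End Propagation.

End WWalks.

Lemma eigen_row (R : pzRingType) n (A : 'M[R]_n) lam (v : 'cV[R]_n) :
  A *m v = lam *: v -> forall x, \sum_j A x j * v j 0 = lam * v x 0.
Proof.
by move=> Av x; have := congr1 (fun B : 'M[R]_(n, 1) => B x 0) Av; rewrite !mxE.
Qed.

Theorem lemma4p4 (R : realType) (n : nat) (M : 'M[R]_n) (lam : R)
  (f : 'cV[R]_n) (a : {set 'I_n} -> R) :
  M^T = M ->
  (forall x y : 'I_n, connect (adj M) x y) ->
  eigenfunction M lam f ->
  eigenfunction M lam
    (\sum_(W in W_classes M f) a W *: restr f (weak_domain M f W)) ->
  forall W1 W2, W1 \in W_classes M f -> W2 \in W_classes M f -> a W1 = a W2.
Proof.
move=> M_sym conn [f_nz Mf] [_ Mg] W1 W2 /imsetP[x1 + ->] /imsetP[x2 + ->].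
rewrite !inE => n1 n2; set K := W_class M f.
have [x0 nx0] : exists x, fv f x != 0.
  by have /matrix0Pn[x [j]] := f_nz; rewrite ord1; exists x.
have [xm nxm xm_max] :=
  @arg_maxP _ _ _ x0 (fun x => fv f x != 0) (fun x => a (K x)) nx0.
set m := a (K xm).
set g := \sum_(W in _) _ in Mg.
have Mh : M *m (g - m *: f) = lam *: (g - m *: f).
  by rewrite mulmxBr -scalemxAr Mg Mf scalerBr !scalerA mulrC.
have h_entry x : (g - m *: f) x 0 = (a (K x) - m) * fv f x.
  by rewrite !mxE /g (weak_domain_combination_entry f M_sym) mulrBl.
have bf_row x :
    \sum_j M x j * ((a (K j) - m) * fv f j) = lam * ((a (K x) - m) * fv f x).
  by rewrite -h_entry -(eigen_row Mh); apply: eq_bigr => j _; rewrite h_entry.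
have b_le0 x : fv f x != 0 -> a (K x) - m <= 0.
  by move=> nx; rewrite subr_le0; exact: xm_max.
have b_W_conn x y : fv f x != 0 -> fv f y != 0 -> W_conn M f x y ->
    a (K x) - m = a (K y) - m.
  by move=> nx ny /(W_class_conn M_sym nx ny) Kxy; rewrite /K Kxy.
have b0 := connected_propagation M_sym (eigen_row Mf) bf_row b_le0 b_W_conn
  conn (subrr m) nxm.
by rewrite (subr0_eq (b0 _ n1)) (subr0_eq (b0 _ n2)).
Qed.
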